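(* Let $n\ge 3$ and let $(T,\mathcal{S})$ be any radial subtree model of $R_n$, with branch points $m_1,\dots,m_n$ as defined in the context. Then for every $1<i<n$, the cover $V(m_i)$ equals $\{a_j\mid i\le j\le n\}\cup\{b_i\}\cup X$, where $X$ is a nonempty subset of $\{c_i,b_{i+1}\}$.
   Context: For $n\ge 3$, $R_n$ is the graph with vertex set $\bigcup_{i=1}^n\{a_i,b_i,c_i,d_i\}$ (all distinct), in which two distinct vertices are adjacent iff they both belong to one of the sets $C_i=\{a_i,b_i,c_i,d_i\}$ ($1\le i\le n$) or $C'_i=\{a_j\mid i\le j\le n\}\cup\{b_i,b_{i+1},c_i\}$ ($1\le i\le n-1$); these are exactly the maximal cliques of $R_n$. A subtree model of a graph $G$ is a pair $(T,\mathcal{S})$, $T$ a tree, $\mathcal{S}=\{S_v\mid v\in V(G)\}$ connected subtrees of $T$ with $S_u\cap S_v\ne\emptyset$ iff $uv\in E(G)$ for distinct $u,v$. It is a radial subtree model if for each $v$ there are a node $c_v$ and an integer $r_v\ge0$ with $S_v$ induced by exactly the nodes at distance at most $r_v$ from $c_v$. The cover of a node $x$ is $V(x)=\{v\mid x\in S_v\}$. For a maximal clique $C$, $S(C)=\bigcap_{v\in C}S_v$ (nonempty; disjoint for distinct maximal cliques). For disjoint subtrees $S,S'$, the connecting path $p(S,S')$ is the minimal path $P$ in $T$ with $S\cup S'\cup P$ connected; it has one endpoint in $S$ and one in $S'$. Branch points: $m_1$ and $m_n$ are the endpoints of $p(S(C_1),S(C_n))$ lying in $S(C_1)$ and $S(C_n)$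 respectively; for $1<i<n$, $s_i$ is the endpoint of $p(S(C_1),S(C_i))$ lying in $S(C_i)$, and $m_i$ is the median of $m_1,m_n,s_i$, i.e. the unique node of $T$ lying on all three paths between pairs of these nodes. *)

From mathcomp Require Import all_boot.
Set Implicit Arguments. Unset Strict Implicit. Unset Printing Implicit Defensive.

(* A vertex is a pair (kind, index) with kind 0,1,2,3 for a,b,c,d and
   index j : 'I_n standing for the paper's index j+1. *)
Notation RV n := ('I_4 * 'I_n)%type.

Definition is_a (n j : nat) (v : RV n) := ((v.1 : nat) == 0) && ((v.2 : nat) == j).
Definition is_b (n j : nat) (v : RV n) := ((v.1 : nat) == 1) && ((v.2 : nat) == j).
Definition is_c (n j : nat) (v : RV n) := ((v.1 : nat) == 2) && ((v.2 : nat) == j).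
Definition is_d (n j : nat) (v : RV n) := ((v.1 : nat) == 3) && ((v.2 : nat) == j).

Definition is_a_ge (n i : nat) (v : RV n) := ((v.1 : nat) == 0) && (i <= v.2).

Definition Cset (n i : nat) : {set RV n} := [set v : RV n | (v.2 : nat) == i].
(* C'_i = {a_j | j >= i} U {b_i, b_{i+1}, c_i}, only for i+1 < n (paper: i <= n-1) *)
Definition C'set (n i : nat) : {set RV n} :=
  [set v : RV n | [|| is_a_ge i v, is_b i v, is_b i.+1 v | is_c i v]].

Definition R_adj (n : nat) : rel (RV n) := fun u v =>
  (u != v) &&
  ([exists i : 'I_n, (u \in Cset n i) && (v \in Cset n i)] ||
   [exists i : 'I_n, [&& i.+1 < n, u \in C'set n i & v \in C'set n i]]).

Section TreeDefs.
Variable T : finType.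
Variable adj : rel T.

Definition walk (x : T) (p : seq T) (y : T) := path adj x p && (last x p == y).

Definition tpath (x : T) (p : seq T) := path adj x p && uniq (x :: p).

Definition is_tree :=
  symmetric adj /\ irreflexive adj /\
  forall x y : T, exists! p : seq T, walk x p y && uniq (x :: p).

Definition conn_set (A : {set T}) :=
  forall x y, x \in A -> y \in A ->
    exists p, path (fun u w => adj u w && (w \in A)) x p && (last x p == y).

Definition subtree (A : {set T}) := A != set0 /\ conn_set A.

(* connecting path p(A,B) = x :: p, with endpoint x in A and last x p in B *)
Definition conn_path (A B : {set T}) (x : T) (p : seq T) :=
  [/\ tpath x p, x \in A, last x p \in B,
      conn_set (A :|: B :|: [set z in x :: p]) &
      forall x' p', tpath x' p' -> x' \in A -> last x' p' \in B ->
        conn_set (A :|: B :|: [set z in x' :: p']) -> size p <= size p'].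

Definition cp_endpoints (A B : {set T}) (x y : T) :=
  exists p, conn_path A B x p /\ last x p = y.

Definition on_path (u v z : T) :=
  exists p, [/\ tpath u p, last u p = v & z \in u :: p].

Definition median (u v w z : T) :=
  [/\ on_path u v z, on_path u w z & on_path v w z].

End TreeDefs.

Section Models.
Variables (G : finType) (e : rel G) (T : finType) (adj : rel T).

Definition subtree_model (S : G -> {set T}) :=
  [/\ is_tree adj,
      forall v, subtree adj (S v) &
      forall u v, u != v -> (S u :&: S v != set0 <-> e u v)].

(* each S_v is exactly the ball of radius r_v around c_v (distance = length
   of a shortest walk) *)
Definition radial (S : G -> {set T}) :=
  forall v, exists (c : T) (r : nat),
    forall y, y \in S v <-> exists p, walk adj c p y /\ size p <= r.

Definition vcover (S : G -> {set T}) (x : T) : {set G} := [set v | x \in S v].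

Definition SC (S : G -> {set T}) (C : {set G}) : {set T} := \bigcap_(v in C) S v.

End Models.

(* The node m_i lies on each of the three tree paths joining m_1, m_n and s_i,
   which lie in S(d_1), S(d_n) and S(d_i). Along any walk of R_n the subtrees
   S_v form a connected union, and a connected subgraph of a tree contains the
   whole path between any two of its nodes; so the clique V(m_i) meets every
   walk of R_n joining two of d_1, d_i, d_n. Walks through the a's exclude
   d_1, d_i and d_n from V(m_i); walks along the b's then force b_i and one of
   c_i, b_(i+1) into V(m_i), which confines V(m_i) to C'_i; finally the walks
   d_1 a_1 a_j c_j b_(j+1) ... b_n d_n (and those through a_i or a_n) force in
   every a_j with j >= i. *)

From mathcomp Require Import all_boot zify.
Set Implicit Arguments. Unset Strict Implicit. Unset Printing Implicit Defensive.

Section TreeConnectivity.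
Variables (T : finType) (adj : rel T).

Lemma conn_setU (A B : {set T}) :
  conn_set adj A -> conn_set adj B -> A :&: B != set0 -> conn_set adj (A :|: B).
Proof.
move=> cA cB /set0Pn[w]; rewrite inE => /andP[wA wB].
pose R u v := adj u v && (v \in A :|: B).
have walk_in (C : {set T}) x y : C \subset A :|: B -> conn_set adj C ->
    x \in C -> y \in C -> exists p, path R x p && (last x p == y).
  move=> sCU cC xC yC; have [p /andP[pp py]] := cC x y xC yC.
  exists p; rewrite py andbT; apply: sub_path pp => u v /andP[uv /(subsetP sCU) vU].
  by rewrite /R uv vU.
have sAU := subsetUl A B; have sBU := subsetUr A B.
move=> x y; rewrite !inE => xAB yAB.
have [p /andP[pp /eqP pw]] : exists p, path R x p && (last x p == w).
  by case/orP: xAB => [xA|xB]; [exact: walk_in cA xA wA | exact: walk_in cB xB wB].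
have [q /andP[qp qy]] : exists q, path R w q && (last w q == y).
  by case/orP: yAB => [yA|yB]; [exact: walk_in cA wA yA | exact: walk_in cB wB yB].
by exists (p ++ q); rewrite cat_path last_cat pw pp qp.
Qed.

Lemma path_in_all (U : {set T}) x p :
  path (fun u w => adj u w && (w \in U)) x p -> all (mem U) p.
Proof. by elim: p x => //= w p IH x /andP[/andP[_ ->] /IH]. Qed.

Lemma conn_set_on_path (U : {set T}) y z m : is_tree adj -> conn_set adj U ->
  y \in U -> z \in U -> on_path adj y z m -> m \in U.
Proof.
move=> [_ [_ tree_paths]] cU yU zU [q [/andP[qp quniq] qz mq]].
have [p /andP[pU /eqP pz]] := cU y z yU zU.
have pp : path adj y p by apply: sub_path pU => u w /andP[].
case: (shortenP pp) pz => p' p'p p'uniq sub_p' p'z.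
have [? [_ unique]] := tree_paths y z.
have qp' : q = p'.
  by rewrite -(unique q) ?(unique p') // /walk ?qp ?p'p ?qz ?p'z ?eqxx ?quniq.
move: mq; rewrite qp' inE => /predU1P[-> // | /sub_p' mp].
by move/allP: (path_in_all pU); apply.
Qed.

Section Chains.
Variables (I : eqType) (F : I -> {set T}).
Hypothesis connF : forall v, conn_set adj (F v).

Lemma conn_set_chain x c : path (fun u v => F u :&: F v != set0) x c ->
  conn_set adj [set t | has (fun v => t \in F v) (x :: c)].
Proof.
elim: c x => [|y c IH] x /=.
  move=> _; have -> : [set t | (t \in F x) || false] = F x.
    by apply/setP => t; rewrite inE orbF.
  exact: connF.
case/andP=> meet_xy /IH conn_c.
have -> : [set t | (t \in F x) || [|| t \in F y | has (fun v => t \in F v) c]]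
          = F x :|: [set t | has (fun v => t \in F v) (y :: c)].
  by apply/setP => t; rewrite !inE.
apply: conn_setU => //; case/set0Pn: meet_xy => t; rewrite !inE => /andP[tx ty].
by apply/set0Pn; exists t; rewrite !inE /= tx ty.
Qed.

Lemma on_path_chain x c u v y z m : is_tree adj ->
  path (fun u v => F u :&: F v != set0) x c -> u \in x :: c -> v \in x :: c ->
  y \in F u -> z \in F v -> on_path adj y z m -> has (fun w => m \in F w) (x :: c).
Proof.
move=> tree /conn_set_chain conn_c uc vc yu zv /(conn_set_on_path tree conn_c).
by rewrite !inE; apply; apply/hasP; [exists u | exists v].
Qed.

End Chains.

End TreeConnectivity.

Section Model.
Variables (n' : nat) (T : finType) (adj : rel T) (S : RV n'.+1 -> {set T}).
Hypothesis model : subtree_model (@R_adj n'.+1) adj S.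

(* Out-of-range indices give junk vertices, whence the bounds k < 4 and j <= n'
   throughout. *)
Definition vtx (p : nat * nat) : RV n'.+1 := (inord p.1, inord p.2).

Lemma vtxK (v : RV n'.+1) : vtx (v.1 : nat, v.2 : nat) = v.
Proof. by case: v => k j; rewrite /vtx !inord_val. Qed.

Lemma vtxE k j : k < 4 -> j <= n' ->
  (vtx (k, j)).1 = k :> nat /\ (vtx (k, j)).2 = j :> nat.
Proof. by move=> k4 jn; rewrite /= !inordK. Qed.

Definition in_C' (k j l : nat) : Prop :=
  (k = 0 /\ l <= j) \/ (k = 1 /\ (j = l \/ j = l.+1)) \/ (k = 2 /\ j = l).

Definition share_clique (k1 j1 k2 j2 : nat) : Prop :=
  j1 = j2 \/ exists2 l, l < n' & in_C' k1 j1 l /\ in_C' k2 j2 l.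

Lemma C'setP (u : RV n'.+1) l : reflect (in_C' u.1 u.2 l) (u \in C'set n'.+1 l).
Proof.
case: u => k j; rewrite inE /is_a_ge /is_b /is_c /in_C' /=.
by apply: (iffP idP) => [/or4P[]|]; lia.
Qed.

Definition meet (p q : nat * nat) := S (vtx p) :&: S (vtx q) != set0.

Lemma meetP k1 j1 k2 j2 : k1 < 4 -> k2 < 4 -> j1 <= n' -> j2 <= n' ->
  reflect (share_clique k1 j1 k2 j2) (meet (k1, j1) (k2, j2)).
Proof.
move=> k1_4 k2_4 j1_n j2_n; rewrite /meet.
have [[u1 u2] [v1 v2]] := (vtxE k1_4 j1_n, vtxE k2_4 j2_n).
case: model => _ subS adjS.
have [uv | uv] := eqVneq (vtx (k1, j1)) (vtx (k2, j2)).
  rewrite -uv setIid; have [-> _] := subS (vtx (k1, j1)).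
  by apply: ReflectT; left; rewrite -u2 -v2 uv.
have meetE := adjS _ _ uv.
apply: (iffP idP) => [/meetE /andP[_ /orP[/existsP[l] | /existsP[l]]] | share].
- by rewrite !inE u2 v2 => /andP[/eqP-> /eqP->]; left.
- case/and3P=> ln /C'setP + /C'setP; rewrite u1 u2 v1 v2 => in1 in2.
  by right; exists l.
- apply/meetE; rewrite /R_adj uv /=; apply/orP; case: share => [j12|[l ln [in1 in2]]].
    by left; apply/existsP; exists (inord j1); rewrite !inE u2 v2 j12 eqxx.
  right; apply/existsP; exists (inord l); rewrite /= inordK; last by lia.
  by rewrite ltnS ln /=; apply/andP; split; apply/C'setP; rewrite ?u1 ?u2 ?v1 ?v2.
Qed.

Lemma meet_C k1 k2 j : k1 < 4 -> k2 < 4 -> j <= n' -> meet (k1, j) (k2, j).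
Proof. by move=> k1_4 k2_4 jn; apply/meetP => //; left. Qed.

Lemma meet_C' l k1 j1 k2 j2 : k1 < 4 -> k2 < 4 -> j1 <= n' -> j2 <= n' -> l < n' ->
  in_C' k1 j1 l -> in_C' k2 j2 l -> meet (k1, j1) (k2, j2).
Proof. by move=> k1_4 k2_4 j1n j2n ln in1 in2; apply/meetP => //; right; exists l. Qed.

Definition bseg (lo len : nat) := [seq (1, t) | t <- iota lo len].

Lemma mem_bseg k j lo len : ((k, j) \in bseg lo len) = (k == 1) && (lo <= j < lo + len).
Proof.
apply/mapP/andP => [[t + [-> ->]] | [/eqP-> jlo]]; first by rewrite mem_iota.
by exists j; rewrite ?mem_iota.
Qed.

Lemma path_b_to_d lo hi : lo <= hi <= n' ->
  path meet (1, lo) (bseg lo.+1 (hi - lo) ++ [:: (3, hi)]).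
Proof.
case/andP=> /subnKC hi_eq; rewrite -{1 3}hi_eq; move: (hi - lo) => d {hi_eq hi}.
elim: d lo => [|d IH] lo hin /=.
  by rewrite addn0 andbT; apply: meet_C => //; lia.
apply/andP; split; first by apply: (meet_C' (l := lo)); rewrite /in_C'; lia.
by rewrite -addSnnS; apply: IH; lia.
Qed.

Lemma conn_S_vtx p : conn_set adj (S (vtx p)).
Proof. by case: model => _ /(_ (vtx p)) []. Qed.

Lemma SC_vtx y k j :
  y \in SC S (Cset n'.+1 j) -> k < 4 -> j <= n' -> y \in S (vtx (k, j)).
Proof. by move=> /bigcapP yC k4 jn; apply: yC; rewrite inE (proj2 (vtxE k4 jn)). Qed.

Lemma cover_share m k1 j1 k2 j2 : m \in S (vtx (k1, j1)) -> m \in S (vtx (k2, j2)) ->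
  k1 < 4 -> k2 < 4 -> j1 <= n' -> j2 <= n' -> share_clique k1 j1 k2 j2.
Proof.
by move=> h1 h2 *; apply/meetP => //; apply/set0Pn; exists m; rewrite inE h1 h2.
Qed.

Lemma path_c_to_d j : j < n' ->
  path meet (2, j) ((1, j.+1) :: bseg j.+2 (n' - j.+1) ++ [:: (3, n')]).
Proof.
move=> jn /=; rewrite path_b_to_d ?andbT; last by lia.
by apply: (meet_C' (l := j)); rewrite ?/in_C'; lia.
Qed.

Lemma cover_hit_chain m x c u v y z : is_tree adj -> path meet x c ->
  u \in x :: c -> v \in x :: c -> y \in S (vtx u) -> z \in S (vtx v) ->
  on_path adj y z m -> has (fun w => m \in S (vtx w)) (x :: c).
Proof. exact: (on_path_chain conn_S_vtx). Qed.

Section MedianCover.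
Variables (i : nat) (m1 mn s m : T).
Hypotheses (tree : is_tree adj) (i_gt0 : 0 < i) (i_lt : i < n').
Hypotheses (m1_d0 : m1 \in S (vtx (3, 0))) (mn_dn : mn \in S (vtx (3, n'))).
Hypotheses (s_di : s \in S (vtx (3, i))) (med : median adj m1 mn s m).

Let cover_hit := has (fun w => m \in S (vtx w)).

Lemma hit_an_ai : cover_hit [:: (3, n'); (0, n'); (0, i); (3, i)].
Proof.
case: med => _ _ mns; apply: (cover_hit_chain tree _ _ _ mn_dn s_di mns);
  rewrite ?inE ?eqxx ?orbT //.
apply/and4P; split=> //; first exact: meet_C.
  by apply: (meet_C' (l := 0)); rewrite ?/in_C'; lia.
by apply: meet_C; lia.
Qed.

Lemma hit_a0_an : cover_hit [:: (3, 0); (0, 0); (0, n'); (3, n')].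
Proof.
case: med => m1mn _ _; apply: (cover_hit_chain tree _ _ _ m1_d0 mn_dn m1mn);
  rewrite ?inE ?eqxx ?orbT //.
apply/and4P; split=> //; first exact: meet_C.
  by apply: (meet_C' (l := 0)); rewrite ?/in_C'; lia.
exact: meet_C.
Qed.

Lemma hit_a0_ai : cover_hit [:: (3, 0); (0, 0); (0, i); (3, i)].
Proof.
case: med => _ m1s _; apply: (cover_hit_chain tree _ _ _ m1_d0 s_di m1s);
  rewrite ?inE ?eqxx ?orbT //.
apply/and4P; split=> //; first exact: meet_C.
  by apply: (meet_C' (l := 0)); rewrite ?/in_C'; lia.
by apply: meet_C; lia.
Qed.

Lemma hit_b_upto_i : cover_hit [:: (3, 0), (1, 0) & bseg 1 i ++ [:: (3, i)]].
Proof.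
case: med => _ m1s _; apply: (cover_hit_chain tree _ _ _ m1_d0 s_di m1s);
  rewrite ?(inE, mem_cat) ?eqxx ?orbT //.
apply/andP; split; first exact: meet_C.
by have := @path_b_to_d 0 i; rewrite subn0; apply; lia.
Qed.

Lemma hit_ci_b_above :
  cover_hit [:: (3, i), (2, i), (1, i.+1) & bseg i.+2 (n' - i.+1) ++ [:: (3, n')]].
Proof.
case: med => _ _ mns; apply: (cover_hit_chain tree _ _ _ mn_dn s_di mns);
  rewrite ?(inE, mem_cat) ?eqxx ?orbT //.
by apply/andP; split; [apply: meet_C | apply: path_c_to_d]; lia.
Qed.

Lemma hit_aj_cj j : i < j < n' ->
  cover_hit [:: (3, 0), (0, 0), (0, j), (2, j), (1, j.+1)
             & bseg j.+2 (n' - j.+1) ++ [:: (3, n')]].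
Proof.
move=> ijn; case: med => m1mn _ _.
apply: (cover_hit_chain tree _ _ _ m1_d0 mn_dn m1mn); rewrite ?(inE, mem_cat) ?eqxx ?orbT //.
apply/and4P; split; first exact: meet_C.
- by apply: (meet_C' (l := 0)); rewrite ?/in_C'; lia.
- by apply: meet_C; lia.
- by apply: path_c_to_d; lia.
Qed.

Lemma cover_vtx_neq p q : m \in S (vtx p) -> m \notin S (vtx q) -> p != q.
Proof. by move=> hp; apply: contraNneq => <-. Qed.

Lemma d0_notin_cover : m \notin S (vtx (3, 0)).
Proof.
apply/negP=> h0; case/hasP: hit_an_ai => -[k j]; rewrite !inE !xpair_eqE => kj h.
have: share_clique 3 0 k j by apply: (cover_share h0 h); lia.
by rewrite /share_clique /in_C' => -[?|[l ? ?]]; lia.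
Qed.

Lemma di_notin_cover : m \notin S (vtx (3, i)).
Proof.
apply/negP=> h0; case/hasP: hit_a0_an => -[k j]; rewrite !inE !xpair_eqE => kj h.
have: share_clique 3 i k j by apply: (cover_share h0 h); lia.
by rewrite /share_clique /in_C' => -[?|[l ? ?]]; lia.
Qed.

Lemma dn_notin_cover : m \notin S (vtx (3, n')).
Proof.
apply/negP=> h0; case/hasP: hit_a0_ai => -[k j]; rewrite !inE !xpair_eqE => kj h.
have: share_clique 3 n' k j by apply: (cover_share h0 h); lia.
by rewrite /share_clique /in_C' => -[?|[l ? ?]]; lia.
Qed.

Lemma b_low_in_cover : exists2 t, t <= i & m \in S (vtx (1, t)).
Proof.
case/hasP: hit_b_upto_i => -[k j] + h.
have := cover_vtx_neq h d0_notin_cover; have := cover_vtx_neq h di_notin_cover.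
rewrite !(inE, mem_cat, mem_bseg, xpair_eqE) => ? ? ?.
by exists j; [lia | have <- : k = 1 by lia].
Qed.

Lemma c_or_b_high_in_cover :
  exists k j, m \in S (vtx (k, j)) /\ (k = 2 /\ j = i \/ k = 1 /\ i < j <= n').
Proof.
case/hasP: hit_ci_b_above => -[k j] + h.
have := cover_vtx_neq h di_notin_cover; have := cover_vtx_neq h dn_notin_cover.
rewrite !(inE, mem_cat, mem_bseg, xpair_eqE) => ? ? ?.
by exists k, j; split=> //; lia.
Qed.

Lemma b_in_cover : m \in S (vtx (1, i)).
Proof.
have [t ti hb] := b_low_in_cover; have [k [j [hx kj]]] := c_or_b_high_in_cover.
have ti_eq : t = i.
  have: share_clique 1 t k j by apply: (cover_share hb hx); lia.
  by rewrite /share_clique /in_C' => -[?|[l ? ?]]; lia.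
by rewrite -ti_eq.
Qed.

Lemma c_or_b_next_in_cover : m \in S (vtx (2, i)) \/ m \in S (vtx (1, i.+1)).
Proof.
have [k [j [hx kj]]] := c_or_b_high_in_cover.
have: share_clique 1 i k j by apply: (cover_share b_in_cover hx); lia.
rewrite /share_clique /in_C' => share; move: hx.
have [[-> ->] | [-> ->]] : k = 2 /\ j = i \/ k = 1 /\ j = i.+1.
- by case: share => [?|[l ? ?]]; lia.
- exact: or_introl.
- exact: or_intror.
Qed.

Lemma cover_sub_C' k j : m \in S (vtx (k, j)) -> k < 4 -> j <= n' -> in_C' k j i.
Proof.
move=> h k4 jn; have := cover_vtx_neq h di_notin_cover; rewrite xpair_eqE => ne_di.
case: c_or_b_next_in_cover => hx.
  have: share_clique k j 2 i by apply: (cover_share h hx); lia.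
  by rewrite /share_clique /in_C' => -[?|[l ? ?]]; lia.
have: share_clique k j 1 i by apply: (cover_share h b_in_cover); lia.
have: share_clique k j 1 i.+1 by apply: (cover_share h hx); lia.
by rewrite /share_clique /in_C' => -[?|[l ? ?]] [?|[l' ? ?]]; lia.
Qed.

Lemma cover_in_chain c k0 j0 : cover_hit c ->
  (forall k j, (k, j) \in c -> k < 4 /\ j <= n' /\ (in_C' k j i -> k = k0 /\ j = j0)) ->
  m \in S (vtx (k0, j0)).
Proof.
move=> /hasP[[k j] kj h] /(_ k j kj) [k4 [jn]].
by case/(_ (cover_sub_C' h k4 jn)) => <- <-.
Qed.

Lemma a_ge_in_cover j : i <= j <= n' -> m \in S (vtx (0, j)).
Proof.
move=> ijn; have [-> | ij] := eqVneq j i.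
  by apply: (cover_in_chain hit_a0_ai) => k j'; rewrite !inE !xpair_eqE /in_C'; lia.
have [-> | jn] := eqVneq j n'.
  by apply: (cover_in_chain hit_a0_an) => k j'; rewrite !inE !xpair_eqE /in_C'; lia.
have ijn' : i < j < n' by lia.
apply: (cover_in_chain (hit_aj_cj ijn')) => k j'.
by rewrite !(inE, mem_cat, mem_bseg, xpair_eqE) /in_C'; lia.
Qed.

Lemma median_vcover : exists X : {set RV n'.+1},
  [/\ X \subset [set v | is_c i v || is_b i.+1 v], X != set0 &
      vcover S m = [set v | is_a_ge i v || is_b i v] :|: X].
Proof.
exists (vcover S m :&: [set v | is_c i v || is_b i.+1 v]); split; first exact: subsetIr.
  apply/set0Pn; case: c_or_b_next_in_cover => h.
    exists (vtx (2, i)); rewrite !inE h /is_c.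
    by have [-> ->] := @vtxE 2 i isT (ltnW i_lt); rewrite !eqxx.
  exists (vtx (1, i.+1)); rewrite !inE h /is_b.
  by have [-> ->] := @vtxE 1 i.+1 isT i_lt; rewrite !eqxx orbT.
apply/setP => -[k j]; rewrite !inE -[in m \in S _](vtxK (k, j)).
rewrite /is_a_ge /is_b /is_c /=.
have k4 := ltn_ord k; have jn : j <= n' by rewrite -ltnS.
apply/idP/idP => [h | ].
  by have := cover_sub_C' h k4 jn; rewrite h /in_C'; lia.
case/orP=> [/orP[/andP[/eqP k0 ij] | /andP[/eqP k1 /eqP ji]] | /andP[// _]].
  by rewrite k0; apply: a_ge_in_cover; rewrite ij.
by rewrite k1 ji; exact: b_in_cover.
Qed.

End MedianCover.
End Model.

Theorem lemma5 (n : nat) (hn : 3 <= n) (T : finType) (adj : rel T)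
    (S : RV n -> {set T}) :
  subtree_model (@R_adj n) adj S -> radial adj S ->
  forall m1 mn : T,
    cp_endpoints adj (SC S (Cset n 0)) (SC S (Cset n n.-1)) m1 mn ->
  forall i : nat, 0 < i < n.-1 ->
  forall s m : T,
    (exists x, cp_endpoints adj (SC S (Cset n 0)) (SC S (Cset n i)) x s) ->
    median adj m1 mn s m ->
  exists X : {set RV n},
    [/\ X \subset [set v : RV n | is_c i v || is_b i.+1 v],
        X != set0 &
        vcover S m = [set v : RV n | is_a_ge i v || is_b i v] :|: X].
Proof.
case: n hn S => [//|n'] _ S model _ m1 mn [p [[_ m1C mnC _ _] <-]] i /andP[i_gt0 i_lt].
move=> s m [x [q [[_ _ sC _ _] <-]]] med.
have tree : is_tree adj by case: model.
apply: (median_vcover model tree i_gt0 i_lt _ _ _ med); apply: SC_vtx => //.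
exact: ltnW.
Qed.
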